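(* Let $w\in W^{\mathfrak p}$ and let $\mu$ be a labeling of the points of $P=\{-2n,\dots,-1,1,\dots,2n\}$ by symbols $\uparrow,\downarrow$ which is antisymmetric (the label at $-j$ is the opposite of the label at $j$ for all $j$) and has $\uparrow$ at every point $n+1,\dots,2n$. If every cup of $C(w)$ has one endpoint labeled $\uparrow$ and the other labeled $\downarrow$ by $\mu$, then the number of $j\in\{1,\dots,n\}$ with label $\uparrow$ is even.
   Context: Let $n\ge4$, $W$ the Weyl group of type $D_n$ with simple reflections $s_0,\dots,s_{n-1}$ ($s_0,s_1$ both joined to $s_2$, $s_i$ joined to $s_{i+1}$ for $i\ge2$), $W_{\mathfrak p}=\langle s_1,\dots,s_{n-1}\rangle$, $W^{\mathfrak p}$ the minimal length representatives of $W_{\mathfrak p}\backslash W$. For $w\in W^{\mathfrak p}$ let $(\alpha_1,\dots,\alpha_n)=(+,\dots,+)\cdot w$ for the right action on $\{+,-\}^n$ where $s_i$ ($i\ge1$) swaps entries $i,i+1$ and $s_0$ sends $(a_1,a_2,\dots)$ to $(-a_2,-a_1,\dots)$; set $\alpha_{-i}=-\alpha_i$. Label $P$ by $+$ at $j<-n$, $-$ at $j>n$, $\alpha_j$ at $1\le|j|\le n$. Let $M$ be the unique set of non-intersecting arcs in the lower half plane matching the points of $P$ in pairs, each arc joining a $+$ point to a $-$ point on its right. The arcs of $M$ joining a negative and a positive point are $(-y_1,y_1),\dots,(-y_{2k},y_{2k})$ with $y_1<\dots<y_{2k}$. The cup diagram $C(w)$ is obtained from $M$ by replacing, for each $j$,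 the arcs $(-y_{2j-1},y_{2j-1})$ and $(-y_{2j},y_{2j})$ by the two (linked) arcs joining $-y_{2j}$ to $y_{2j-1}$ and $-y_{2j-1}$ to $y_{2j}$; its arcs are called cups. *)

From mathcomp Require Import all_boot all_order all_algebra.
Set Implicit Arguments. Unset Strict Implicit. Unset Printing Implicit Defensive.
Import Order.TTheory GRing.Theory Num.Theory.

(* Weyl group of type D_n, realised faithfully as signed permutations   *)
(* of {+-1,...,+-n}.  A signed point +-(k+1) is encoded as (k, b) with   *)
(* k : nat (0-indexed position) and b : bool (the sign).  Elements of W  *)
(* are represented by words in the simple reflections s_0,...,s_{n-1};  *)
(* two words represent the same element iff they act identically.       *)

(* simple reflection s_i acting on signed points:
   s_i (i >= 1) swaps the points i and i+1 (1-indexed), keeping signs;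
   s_0 sends 1 |-> -2, 2 |-> -1 (reflection in e_1 + e_2). *)
Definition gen (i : nat) (x : nat * bool) : nat * bool :=
  let: (k, b) := x in
  if i == 0 then
    (if k == 0 then (1, ~~ b) else if k == 1 then (0, ~~ b) else (k, b))
  else
    (if k == i.-1 then (i, b) else if k == i then (i.-1, b) else (k, b)).

Fixpoint wfun (ws : seq nat) : nat * bool -> nat * bool :=
  match ws with
  | [::] => id
  | i :: ws' => fun x => gen i (wfun ws' x)
  end.

Definition Wsame (u v : seq nat) : Prop := forall x, wfun u x = wfun v x.

Definition word (n : nat) (ws : seq nat) : bool := all (fun i => i < n) ws.

(* words in the generators s_1..s_{n-1} of W_p *)
Definition pword (n : nat) (ws : seq nat) : bool := all (fun i => 0 < i < n) ws.

(* the element w represented by the word ws lies in W^p, i.e. w is of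
   minimal length in its coset W_p w:  l(w) <= l(u w) for all u in W_p. *)
Definition inWp (n : nat) (ws : seq nat) : Prop :=
  forall u v : seq nat, pword n u -> word n v -> Wsame v (u ++ ws) ->
    exists x : seq nat, [/\ word n x, Wsame x ws & size x <= size v].

(* Right action on sign sequences {+,-}^n, as functions on positions    *)
(* 1..n with true = '+' and false = '-'.                                *)
Definition sact (i : nat) (a : nat -> bool) : nat -> bool :=
  if i == 0 then
    fun j => if j == 1 then ~~ a 2 else if j == 2 then ~~ a 1 else a j
  else
    fun j => if j == i then a i.+1 else if j == i.+1 then a i else a j.

(* (alpha_1,...,alpha_n) = (+,...,+) . w  for w = s_{i1} ... s_{ik} *)
Definition alpha (ws : seq nat) : nat -> bool :=
  foldl (fun a i => sact i a) (fun _ => true) ws.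

Local Open Scope ring_scope.

Definition inP (n : nat) (j : int) : bool :=
  (j != 0) && (- (2 * n)%:Z <= j <= (2 * n)%:Z).

Definition lab (n : nat) (ws : seq nat) (j : int) : bool :=
  if j < - n%:Z then true
  else if n%:Z < j then false
  else if 0 < j then alpha ws `|j|%N
  else ~~ alpha ws `|j|%N.

(* M is a set of non-intersecting arcs (lower half plane) matching the
   points of P in pairs, each arc (a, b), a < b, joining a '+' point a to
   a '-' point b on its right. *)
Definition is_M (n : nat) (ws : seq nat) (M : seq (int * int)) : Prop :=
  [/\ (forall p, p \in M ->
         [&& inP n p.1, inP n p.2, p.1 < p.2, lab n ws p.1 & ~~ lab n ws p.2]),
      (forall j, inP n j -> count (fun p => (p.1 == j) || (p.2 == j)) M = 1%N)
    & (forall p q, p \in M -> q \in M -> ~~ [&& p.1 < q.1, q.1 < p.2 & p.2 < q.2])].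

Definition cross_arcs (M : seq (int * int)) : seq (int * int) :=
  [seq p <- M | (p.1 < 0) && (0 < p.2)].

Definition ys (M : seq (int * int)) : seq int :=
  sort (fun x y : int => x <= y) (map snd (cross_arcs M)).

Definition cups (M : seq (int * int)) : seq (int * int) :=
  [seq p <- M | ~~ ((p.1 < 0) && (0 < p.2))] ++
  flatten [seq let a := nth 0 (ys M) (2 * j) in
               let b := nth 0 (ys M) (2 * j).+1 in
               [:: (- b, a); (- a, b)]
          | j <- iota 0 (size (ys M))./2].

From mathcomp Require Import all_boot all_order all_algebra zify.
Import Order.TTheory GRing.Theory Num.Theory.

Set Implicit Arguments.
Unset Strict Implicit.

Local Open Scope ring_scope.

(* Let X, C, K be the numbers of arcs of M crossing 0, lying right of 0 and
   lying left of 0, and e the number of minus signs among alpha_1..alpha_n.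
   Every arc joins a + point to a - point on its right, so counting the
   points of P arc by arc gives 2n = X + 2C (positive points), n + e = X + K
   (negative + points) and n - e = K (negative - points); hence X = 2e.
   Moreover e is even, as s_0 flips two signs at a time.  Now count the up
   labels on positive points, n + #(up in 1..n) of them: each cup right of 0
   carries exactly one, and y_{2j-1}, y_{2j} carry equal labels since the cup
   (-y_{2j}, y_{2j-1}) does not and mu is antisymmetric.  Hence
   #(up in 1..n) = C - n = -e modulo 2. *)

Lemma sum_nat_of_bool (T : Type) (a : pred T) (s : seq T) :
  (\sum_(x <- s) (a x : nat))%N = count a s.
Proof. by elim: s => [|x s IHs]; rewrite ?big_nil ?big_cons ?IHs. Qed.

Section Matchings.

Variable T : eqType.

Definition endpoints (M : seq (T * T)) : seq T :=
  flatten [seq [:: p.1; p.2] | p <- M].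

Lemma count_endpoints (a : pred T) M :
  count a (endpoints M) = (\sum_(p <- M) (a p.1 + a p.2))%N.
Proof.
by elim: M => [|p M IHM]; rewrite ?big_nil // big_cons -IHM /= addnA.
Qed.

Lemma perm_endpoints (s : seq T) (M : seq (T * T)) :
  uniq s -> {in M, forall p, [&& p.1 \in s, p.2 \in s & p.1 != p.2]} ->
  {in s, forall x, count (fun p => (p.1 == x) || (p.2 == x)) M = 1%N} ->
  perm_eq s (endpoints M).
Proof.
move=> s_uniq M_in_s M_cover; apply/allP => x _ /=; apply/eqP.
rewrite count_endpoints count_uniq_mem //.
have [xs | xNs] := boolP (x \in s).
  rewrite -[nat_of_bool true](M_cover x xs) -sum_nat_of_bool; apply: eq_big_seq => p /M_in_s.
  case/and3P=> _ _ /=; case: (p.1 =P x) => [->|]; case: (p.2 =P x) => [->|] //.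
  by rewrite eqxx.
rewrite big1_seq // => p /andP [_ /M_in_s /and3P [p1s p2s _]].
by rewrite /= (negbTE (memPn xNs _ p1s)) (negbTE (memPn xNs _ p2s)).
Qed.

End Matchings.

Lemma count_paired_even (T : Type) (x0 : T) (g : pred T) (s : seq T) :
  ~~ odd (size s) ->
  (forall j, (j < (size s)./2)%N -> g (nth x0 s j.*2) = g (nth x0 s j.*2.+1)) ->
  ~~ odd (count g s).
Proof.
move: {2}(size s) (leqnn (size s)) => k.
elim: k s => [|k IHk] [|x [|y t]] //= size_le s_even s_paired.
rewrite negbK in s_even; rewrite oddD (s_paired 0%N) //= oddD addKb.
apply: IHk => // [|j j_lt].
  by move: size_le; rewrite ltnS => /ltnW.
by move: (s_paired j.+1 j_lt); rewrite doubleS.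
Qed.

Definition transpn (i j : nat) : nat :=
  if j == i then i.+1 else if j == i.+1 then i else j.

Lemma transpnK i : involutive (transpn i).
Proof. by move=> j; rewrite /transpn; do ! case: eqP => //=; lia. Qed.

Lemma count_transpn (a : pred nat) i n : (0 < i < n)%N ->
  count (a \o transpn i) (iota 1 n) = count a (iota 1 n).
Proof.
move=> i_range; rewrite -count_map; apply/permP/uniq_perm.
- by rewrite (map_inj_uniq (can_inj (transpnK i))) iota_uniq.
- exact: iota_uniq.
move=> j; rewrite -{1}(transpnK i j) (mem_map (can_inj (transpnK i))).
by rewrite !mem_iota /transpn; do ! case: eqP => /= ?; lia.
Qed.

Lemma odd_count_sact i (a : nat -> bool) n : (2 <= n)%N -> (i < n)%N ->
  odd (count (predC (sact i a)) (iota 1 n)) = odd (count (predC a) (iota 1 n)).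
Proof.
move=> n_ge2 i_lt; have [->|i_gt0] := posnP i.
  rewrite -(subnKC n_ge2) iotaD !count_cat !oddD; congr addb.
    by rewrite /= /sact /=; case: (a 1%N); case: (a 2%N).
  by congr odd; apply: eq_in_count => j; rewrite mem_iota /sact /=; do 2 case: eqP => [->|_] //.
have i_range : (0 < i < n)%N by rewrite i_gt0.
rewrite -(@count_transpn (predC a) i n i_range); congr odd; apply: eq_count => j.
by rewrite /= /sact /transpn gtn_eqF //; do !case: ifP.
Qed.

Lemma alpha_even n ws : (2 <= n)%N -> word n ws ->
  ~~ odd (count (predC (alpha ws)) (iota 1 n)).
Proof.
rewrite /alpha => n_ge2; have : ~~ odd (count (predC (fun=> true)) (iota 1 n)).
  by rewrite (eq_count (a2 := pred0)) // count_pred0.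
elim: ws (fun=> true) => //= i ws IHws a a_even /andP [i_lt ws_word].
by apply: IHws; rewrite ?odd_count_sact.
Qed.

Lemma count_iota_double (a : pred nat) n :
  count a (iota 1 (2 * n)) = (count a (iota 1 n) + count a (iota n.+1 n))%N.
Proof. by rewrite mul2n -addnn iotaD count_cat. Qed.

Definition enumP (n : nat) : seq int :=
  [seq - i%:Z | i <- iota 1 (2 * n)] ++ [seq i%:Z | i <- iota 1 (2 * n)].

Lemma mem_enumP n j : (j \in enumP n) = inP n j.
Proof.
rewrite mem_cat /inP; apply/orP/idP => [[] /mapP [i] | ].
- by rewrite mem_iota => i_range ->; lia.
- by rewrite mem_iota => i_range ->; lia.
case: j => k k_range.
  by right; apply/mapP; exists k => //; rewrite mem_iota; lia.
by left; apply/mapP; exists k.+1; rewrite ?NegzE // mem_iota; lia.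
Qed.

Lemma enumP_uniq n : uniq (enumP n).
Proof.
rewrite cat_uniq !map_inj_uniq ?iota_uniq => [|x y|x y] /=; try lia.
rewrite andbT; apply/hasP => -[_ /mapP [i + ->] /mapP [k +]].
by rewrite !mem_iota; lia.
Qed.

Lemma count_enumP_neg n (a : pred int) :
  count (fun j => (j < 0) && a j) (enumP n) = count (fun i : nat => a (- i%:Z)) (iota 1 (2 * n)).
Proof.
rewrite count_cat !count_map [X in (_ + X)%N](eq_in_count (a2 := pred0)) ?count_pred0 ?addn0.
  by apply: eq_in_count => i; rewrite mem_iota /= => i_range; have -> : - i%:Z < 0 by lia.
by move=> i; rewrite mem_iota.
Qed.

Lemma count_enumP_pos n (a : pred int) :
  count (fun j => (0 < j) && a j) (enumP n) = count (fun i : nat => a i%:Z) (iota 1 (2 * n)).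
Proof.
rewrite count_cat !count_map [X in (X + _)%N](eq_in_count (a2 := pred0)) ?count_pred0 ?add0n.
  by apply: eq_in_count => i; rewrite mem_iota /= => i_range; have -> : 0 < i%:Z by lia.
by move=> i; rewrite mem_iota /= => i_range; have -> : 0 < - i%:Z = false by lia.
Qed.

Definition crossing (p : int * int) : bool := (p.1 < 0) && (0 < p.2).

Section ArcCounts.

Variables (n : nat) (ws : seq nat) (M : seq (int * int)).
Hypothesis M_arcs : is_M n ws M.

Let e := count (predC (alpha ws)) (iota 1 n).
Let X := count crossing M.
Let C := count (fun p : int * int => 0 < p.1) M.
Let K := count (fun p : int * int => p.2 < 0) M.

Lemma arc_inP p : p \in M -> [&& inP n p.1, inP n p.2 & p.1 < p.2].
Proof. by case: M_arcs => M_lab _ _ /M_lab /and5P [-> -> -> _ _]. Qed.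

Lemma arc_lab p : p \in M -> lab n ws p.1 && ~~ lab n ws p.2.
Proof. by case: M_arcs => M_lab _ _ /M_lab /and5P [_ _ _ -> ->]. Qed.

Lemma arc_nonzero p : p \in M -> [&& p.1 != 0, p.2 != 0 & p.1 < p.2].
Proof. by case/arc_inP/and3P; rewrite /inP => /andP [-> _] /andP [-> _] ->. Qed.

Lemma count_enumP_arcs (a : pred int) :
  count a (enumP n) = (\sum_(p <- M) (a p.1 + a p.2))%N.
Proof.
rewrite -count_endpoints; apply/permP/perm_endpoints; first exact: enumP_uniq.
  by move=> p /arc_inP /and3P [p1 p2 lt12]; rewrite !mem_enumP p1 p2 lt_eqF.
by case: M_arcs => _ M_cover _ j; rewrite mem_enumP => /M_cover.
Qed.

Lemma count_lab_neg : count (fun i : nat => lab n ws (- i%:Z)) (iota 1 (2 * n)) = (e + n)%N.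
Proof.
rewrite count_iota_double; congr addn.
  apply: eq_in_count => i; rewrite mem_iota => i_range.
  by rewrite /lab !ifF ?abszN ?absz_nat //; lia.
rewrite -[RHS](size_iota n.+1) -count_predT; apply: eq_in_count => i; rewrite mem_iota => i_range.
by rewrite /lab ifT //; lia.
Qed.

Lemma count_pos_points : (2 * n = X + C + C)%N.
Proof.
have := count_enumP_arcs (fun j => (0 < j) && true).
rewrite count_enumP_pos count_predT size_iota => ->; rewrite /X /C -!sum_nat_of_bool -!big_split.
by apply: eq_big_seq => -[x y] /arc_nonzero; rewrite /crossing /=; lia.
Qed.

Lemma count_neg_points_plus : (e + n = X + K)%N.
Proof.
have := count_enumP_arcs (fun j => (j < 0) && lab n ws j).
rewrite count_enumP_neg count_lab_neg => ->; rewrite /X /K -!sum_nat_of_bool -big_split.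
apply: eq_big_seq => p p_in; have /andP [-> /negbTE ->] := arc_lab p_in.
by move: (arc_nonzero p_in); rewrite /= andbT andbF /crossing; lia.
Qed.

Lemma count_neg_points_minus : (K + (e + n) = 2 * n)%N.
Proof.
have := count_predC (fun i : nat => lab n ws (- i%:Z)) (iota 1 (2 * n)).
rewrite count_lab_neg size_iota => <-; rewrite addnC; congr addn.
transitivity (count (fun j => (j < 0) && ~~ lab n ws j) (enumP n)); last first.
  by rewrite count_enumP_neg.
rewrite count_enumP_arcs /K -sum_nat_of_bool; apply: eq_big_seq => p p_in.
by have /andP [-> /negbTE ->] := arc_lab p_in; rewrite andbF andbT.
Qed.

Lemma count_crossing : X = (e + e)%N.
Proof. by have := count_neg_points_plus; have := count_neg_points_minus; lia. Qed.

Lemma count_ys (g : pred int) : count g (ys M) = count (fun p => crossing p && g p.2) M.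
Proof.
have /permP -> : perm_eq (ys M) (map snd (cross_arcs M)) by rewrite /ys perm_sort.
rewrite count_map /cross_arcs count_filter.
by apply: eq_count => p; rewrite /= andbC.
Qed.

Lemma ys_inP y : y \in ys M -> inP n y.
Proof.
rewrite mem_sort => /mapP [p]; rewrite mem_filter => /andP [_ /arc_inP].
by case/and3P=> _ p2 _ ->.
Qed.

Variable mu : int -> bool.
Hypothesis mu_anti : forall j : int, inP n j -> mu (- j) = ~~ mu j.
Hypothesis mu_up : forall j : nat, (n < j <= 2 * n)%N -> mu j%:Z.
Hypothesis mu_cups : forall c, c \in cups M -> mu c.1 != mu c.2.

Let a := count (fun j : nat => mu j%:Z) (iota 1 n).

Lemma count_pos_points_up : (a + n = count mu (ys M) + C)%N.
Proof.
have := count_enumP_arcs (fun j => (0 < j) && mu j).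
rewrite count_enumP_pos count_iota_double.
have -> : count (fun i : nat => mu i%:Z) (iota n.+1 n) = n.
  rewrite -[RHS](size_iota n.+1) -count_predT; apply: eq_in_count => i.
  by rewrite mem_iota => i_range; apply: mu_up; lia.
move=> ->; rewrite count_ys /C -!sum_nat_of_bool -big_split.
apply: eq_big_seq => p p_in.
have p_cup : ~~ crossing p -> mu p.1 != mu p.2.
  by move=> p_nc; apply: mu_cups; rewrite mem_cat mem_filter -/(crossing p) p_nc p_in.
move: (arc_nonzero p_in) p_cup; rewrite /crossing.
by case: (mu p.1); case: (mu p.2) => /=; lia.
Qed.

Lemma count_ys_even : ~~ odd (count mu (ys M)).
Proof.
have size_ys : size (ys M) = X.
  by rewrite -count_predT count_ys; apply: eq_count => p; rewrite andbT.
apply: (count_paired_even (x0 := 0)) => [|j j_lt].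
  by rewrite size_ys count_crossing addnn odd_double.
rewrite -mul2n; set u := (ys M)`_(2 * j); set v := (ys M)`_(2 * j).+1.
have uv_cup : (- v, u) \in cups M.
  rewrite mem_cat; apply/orP; right; apply/flatten_mapP; exists j.
    by rewrite mem_iota.
  exact: mem_head.
have v_ys : v \in ys M.
  apply: mem_nth; move: j_lt (odd_double_half (size (ys M))).
  by rewrite -mul2n; move: (size _) => s; lia.
have := mu_cups uv_cup; rewrite /= mu_anti ?ys_inP //.
by case: (mu u); case: (mu v).
Qed.

End ArcCounts.

Theorem lemma3p5 (n : nat) (ws : seq nat) (M : seq (int * int)) (mu : int -> bool) :
  (4 <= n)%N ->
  word n ws -> inWp n ws ->
  is_M n ws M ->
  (forall j : int, inP n j -> mu (- j) = ~~ mu j) ->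
  (forall j : nat, (n < j <= 2 * n)%N -> mu j%:Z) ->
  (forall c, c \in cups M -> mu c.1 != mu c.2) ->
  ~~ odd (count (fun j : nat => mu j%:Z) (iota 1 n)).
Proof.
move=> n_ge4 ws_word _ M_arcs mu_anti mu_up mu_cups.
move: (alpha_even (ltnW (ltnW n_ge4)) ws_word) (count_ys_even M_arcs mu_anti mu_cups).
move: (count_pos_points_up M_arcs mu_up mu_cups) (count_pos_points M_arcs) (count_crossing M_arcs).
set a := count (fun j : nat => mu j%:Z) _; set e := count (predC _) _; set Y := count mu _.
move=> up_eq pos_eq X_eq e_even Y_even; have a_e : (a + e = Y)%N by lia.
by move: Y_even; rewrite -a_e oddD (negbTE e_even) addbF.
Qed.
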